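(* Let $n\ge 2$, let $\mathcal{S}\subseteq(\mathbb{C}^d)^{\otimes n}$ be the permutation-symmetric subspace, let $|\psi\rangle\in\mathcal{S}$ and let $X$ be a $d\times d$ complex matrix with $X_{(1)}|\psi\rangle\in\mathcal{S}$. Then for all nonnegative integers $p_1,\ldots,p_n$ with $p_1+\cdots+p_n=p$, $$X^p_{(1)}|\psi\rangle=X^{p_1}\otimes X^{p_2}\otimes\cdots\otimes X^{p_n}|\psi\rangle.$$ If $X$ is invertible, the same holds for all integers $p_1,\ldots,p_n$ (possibly negative) with $p_1+\cdots+p_n=p$.
   Context: $\mathcal{S}$ is the set of vectors in $(\mathbb{C}^d)^{\otimes n}$ invariant under all permutations of the $n$ tensor factors. $X^p_{(1)}$ denotes $X^p\otimes\mathbb{I}\otimes\cdots\otimes\mathbb{I}$ on $(\mathbb{C}^d)^{\otimes n}$. *)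

From mathcomp Require Import all_boot all_algebra complex.
From mathcomp Require Import fingroup perm.
From mathcomp Require Import Rstruct.
Set Implicit Arguments. Unset Strict Implicit. Unset Printing Implicit Defensive.
Import GRing.Theory Num.Theory.
Local Open Scope ring_scope.

Definition C : Type := Rdefinitions.R[i].

(* Computational basis indices of (C^d)^{\otimes n}: functions 'I_n -> 'I_d. *)
Definition idx (n d : nat) := {ffun 'I_n -> 'I_d}.

(* Vectors in (C^d)^{\otimes n}, as coordinate functions on the product basis. *)
Definition tvec (n d : nat) := idx n d -> C.

(* (A_0 \otimes ... \otimes A_{n-1}) applied to psi. *)
Definition tensor_apply (n d : nat) (A : 'I_n -> 'M[C]_d) (psi : tvec n d)
  : tvec n d :=
  fun i => \sum_(j : idx n d) (\prod_(k < n) A k (i k) (j k)) * psi j.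

Definition symmetric_vec (n d : nat) (psi : tvec n d) : Prop :=
  forall (s : 'S_n) (i : idx n d), psi [ffun k => i (s k)] = psi i.

(* Y_(1) = Y \otimes I \otimes ... \otimes I, acting on the first factor. *)
Definition first_factor (n d : nat) (Y : 'M[C]_d) : 'I_n -> 'M[C]_d :=
  fun k => if val k == 0%N then Y else 1%:M.

Definition mxpowz (d : nat) (X : 'M[C]_d) (z : int) : 'M[C]_d :=
  match z with
  | Posz m => X ^+ m
  | Negz m => (invmx X) ^+ m.+1
  end.

From mathcomp Require Import fingroup perm.
From mathcomp Require Import all_boot all_algebra complex.
From mathcomp Require Import Rstruct.
From Stdlib Require Import FunctionalExtensionality.
Import GRing.Theory Num.Theory.
Local Open Scope ring_scope.
Set Implicit Arguments. Unset Strict Implicit.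

(* If psi and X_(1) psi are both symmetric, a transposition of tensor factors shows
   that X acting on any factor of psi gives the same vector ("site invariance").
   Site invariance survives applying, at any site, a matrix commuting with X, so the
   factors X^p_k can be moved one at a time onto the first site, where they
   multiply to X^p.  For invertible X, site invariance passes to X^-1, and integer
   exponents split into a power of X times a power of X^-1. *)

Section TensorOperators.
Variables n d : nat.
Implicit Types (A B : 'I_n -> 'M[C]_d) (M N : 'M[C]_d) (phi psi : tvec n d).

Lemma eq_tensor_apply A B phi : A =1 B -> tensor_apply A phi = tensor_apply B phi.
Proof. by move/functional_extensionality->. Qed.

Lemma tensor_apply_mul A B phi :
  tensor_apply A (tensor_apply B phi) = tensor_apply (fun k => A k *m B k) phi.
Proof.
apply: functional_extensionality => i; rewrite /tensor_apply.
under eq_bigr do rewrite big_distrr /=.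
rewrite exchange_big /=; apply: eq_bigr => l _.
under [in RHS]eq_bigr do rewrite mxE.
rewrite bigA_distr_bigA /= big_distrl /=.
by apply: eq_bigr => j _; rewrite mulrA -big_split.
Qed.

Lemma tensor_apply_id phi : tensor_apply (fun=> 1%:M) phi = phi.
Proof.
apply: functional_extensionality => i.
rewrite /tensor_apply (bigD1 i) //= [X in _ + X]big1 => [|j ji].
  by rewrite addr0 big1 ?mul1r // => k _; rewrite mxE eqxx.
have [k ik] : exists k, i k != j k.
  apply/existsP; move: ji; apply: contraR; rewrite negb_exists => /forallP ij.
  by apply/eqP/ffunP => k; apply/esym/eqP/negPn/ij.
by rewrite (bigD1 k) //= mxE (negbTE ik) !mul0r.
Qed.

Lemma tensor_apply_perm A psi (s : 'S_n) (i : idx n d) :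
  symmetric_vec psi ->
  tensor_apply A psi [ffun k => i (s k)]
  = tensor_apply (fun k => A (s^-1 k)%g) psi i.
Proof.
move=> sym_psi; rewrite /tensor_apply.
pose permute (j : idx n d) : idx n d := [ffun k => j (s k)].
have permute_inj : injective permute.
  move=> j1 j2 /ffunP eq_j; apply/ffunP => k.
  by have := eq_j (s^-1 k)%g; rewrite !ffunE permKV.
rewrite (reindex_inj permute_inj) /=; apply: eq_bigr => j _.
rewrite sym_psi; congr (_ * _).
rewrite [RHS](reindex_inj (@perm_inj _ s)) /=.
by apply: eq_bigr => k _; rewrite !ffunE permK.
Qed.

Definition at_site (k : 'I_n) M : 'I_n -> 'M[C]_d :=
  fun j => if j == k then M else 1%:M.

Lemma at_site1 k phi : tensor_apply (at_site k 1%:M) phi = phi.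
Proof.
by rewrite -[RHS]tensor_apply_id; apply: eq_tensor_apply => j; rewrite /at_site; case: ifP.
Qed.

Lemma at_siteM k M N phi :
  tensor_apply (at_site k M) (tensor_apply (at_site k N) phi)
  = tensor_apply (at_site k (M *m N)) phi.
Proof.
rewrite tensor_apply_mul; apply: eq_tensor_apply => j.
by rewrite /at_site; case: ifP; rewrite ?mulmx1.
Qed.

Lemma at_site_comm k k' M N phi : M *m N = N *m M ->
  tensor_apply (at_site k M) (tensor_apply (at_site k' N) phi)
  = tensor_apply (at_site k' N) (tensor_apply (at_site k M) phi).
Proof.
move=> MN; rewrite !tensor_apply_mul; apply: eq_tensor_apply => j; rewrite /at_site.
by case: (j == k); case: (j == k'); rewrite ?mulmx1 ?mul1mx.
Qed.

Definition site_invariant M phi :=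
  forall k k', tensor_apply (at_site k M) phi = tensor_apply (at_site k' M) phi.

Lemma site_invariant_sym k0 M psi :
  symmetric_vec psi -> symmetric_vec (tensor_apply (at_site k0 M) psi) ->
  site_invariant M psi.
Proof.
move=> sym_psi sym_Mpsi.
suff to_k0 k : tensor_apply (at_site k M) psi = tensor_apply (at_site k0 M) psi.
  by move=> k k'; rewrite !to_k0.
apply: functional_extensionality => i.
rewrite -(sym_Mpsi (tperm k0 k) i) tensor_apply_perm //; congr (tensor_apply _ psi i).
apply: functional_extensionality => j; rewrite /at_site tpermV.
by rewrite -{2}(tpermR k0 k) (inj_eq perm_inj).
Qed.

Lemma site_invariant_at_site M N k phi : M *m N = N *m M ->
  site_invariant M phi -> site_invariant M (tensor_apply (at_site k N) phi).
Proof.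
by move=> MN inv_M k1 k2; rewrite (at_site_comm k1) // (at_site_comm k2) // (inv_M k1 k2).
Qed.

Lemma site_invariantV M phi : M \in unitmx ->
  site_invariant M phi -> site_invariant (invmx M) phi.
Proof.
move=> uM inv_M k k'.
have VM : invmx M *m M = 1%:M by rewrite mulVmx.
have VM_comm : invmx M *m M = M *m invmx M by rewrite mulmxV.
rewrite -{1}(at_site1 k' phi) -VM -at_siteM -(inv_M k) at_site_comm //.
by rewrite at_siteM VM at_site1.
Qed.

Lemma tensor_apply_pow_site_invariant k0 M phi (ps : 'I_n -> nat) :
  site_invariant M phi ->
  tensor_apply (fun k => M ^+ ps k) phi
  = tensor_apply (at_site k0 (M ^+ \sum_(k < n) ps k)) phi.
Proof.
move: {2}(\sum_(k < n) ps k)%N (erefl (\sum_(k < n) ps k)%N) => s.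
elim: s ps phi => [|s IHs] ps phi sum_ps inv_M.
  have ps0 k : ps k = 0%N.
    by move/eqP: sum_ps; rewrite sum_nat_eq0 => /forallP/(_ k)/implyP/(_ isT)/eqP.
  rewrite sum_ps expr0 -idmxE at_site1 -[RHS]tensor_apply_id.
  by apply: eq_tensor_apply => k; rewrite ps0 expr0 idmxE.
have /existsP [k ps_k] : [exists k, 0 < ps k]%N.
  move: (ltn0Sn s); rewrite -sum_ps lt0n sum_nat_eq0 negb_forall.
  by move=> /existsP [j]; rewrite /= -lt0n => ps_j; apply/existsP; exists j.
pose ps' j := (ps j - (j == k))%N.
have ps_split j : ps j = (ps' j + (j == k))%N.
  by rewrite subnK //; case: eqP => [->|].
have sum_ps' : (\sum_(j < n) ps' j)%N = s.
  have sum_delta : (\sum_(j < n) (j == k))%N = 1%N.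
    by rewrite (bigD1 k) //= eqxx big1 // => j /negbTE->.
  apply/eqP; rewrite -eqSS -sum_ps (eq_bigr _ (fun j _ => ps_split j)) big_split /=.
  by rewrite sum_delta addn1.
have step_k : tensor_apply (fun j => M ^+ ps j) phi
              = tensor_apply (fun j => M ^+ ps' j) (tensor_apply (at_site k M) phi).
  rewrite tensor_apply_mul; apply: eq_tensor_apply => j.
  rewrite ps_split exprD /at_site.
  by case: eqP => _ /=; rewrite ?expr1 ?expr0 ?mulr1 ?mulmx1 ?mulmxE.
rewrite step_k (inv_M k k0) IHs //; last by apply: site_invariant_at_site.
by rewrite at_siteM sum_ps sum_ps' mulmxE -exprSr.
Qed.

End TensorOperators.

Definition int_pos (z : int) : nat := if z is Posz m then m else 0.
Definition int_neg (z : int) : nat := if z is Negz m then m.+1 else 0.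

Lemma int_pos_negE (z : int) : z = (int_pos z)%:Z - (int_neg z)%:Z.
Proof. by case: z => m /=; rewrite ?subr0 ?sub0r -?NegzE. Qed.

Lemma exprz_pos_neg (R : unitRingType) (x : R) (z : int) :
  x ^ z = x ^+ int_pos z * x^-1 ^+ int_neg z.
Proof. by case: z => m /=; rewrite ?expr0 ?mulr1 ?mul1r ?exprVn. Qed.

Lemma mxpowzE d (X : 'M[C]_d.+1) (z : int) : mxpowz X z = X ^ z.
Proof. by case: z => m //=; rewrite exprVn. Qed.

Lemma tensor_apply_powz_site_invariant n d k0 (X : 'M[C]_d.+1) (psi : tvec n d.+1)
    (ps : 'I_n -> int) :
  X \in unitmx -> site_invariant X psi ->
  tensor_apply (fun k => X ^ ps k) psi
  = tensor_apply (at_site k0 (X ^ \sum_(k < n) ps k)) psi.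
Proof.
move=> uX inv_X; have inv_V := site_invariantV uX inv_X.
set A := (\sum_(k < n) int_pos (ps k))%N; set B := (\sum_(k < n) int_neg (ps k))%N.
have sum_ps : \sum_(k < n) ps k = A%:Z - B%:Z.
  rewrite (eq_bigr _ (fun k _ => int_pos_negE (ps k))) sumrB.
  by rewrite !(big_morph Posz PoszD (erefl _)).
have XV : X *m X^-1 ^+ B = X^-1 ^+ B *m X.
  by rewrite !mulmxE; apply: commrX; rewrite /GRing.comm -!mulmxE mulmxV // mulVmx.
transitivity (tensor_apply (fun k => X ^+ int_pos (ps k))
                (tensor_apply (fun k => X^-1 ^+ int_neg (ps k)) psi)).
  by rewrite tensor_apply_mul; apply: eq_tensor_apply => k; rewrite exprz_pos_neg mulmxE.
rewrite (tensor_apply_pow_site_invariant k0 _ inv_V) (tensor_apply_pow_site_invariant k0).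
  by rewrite at_siteM mulmxE sum_ps exprzDr // -exprnN -exprVn.
exact: site_invariant_at_site.
Qed.

Theorem corollary1 (n d : nat) (psi : tvec n d) (X : 'M[C]_d) :
  (2 <= n)%N ->
  symmetric_vec psi ->
  symmetric_vec (tensor_apply (first_factor (n:=n) X) psi) ->
  (forall (p : nat) (ps : 'I_n -> nat), (\sum_(k < n) ps k)%N = p ->
     tensor_apply (first_factor (n:=n) (X ^+ p)) psi
     = tensor_apply (fun k => X ^+ ps k) psi)
  /\
  (X \in unitmx ->
   forall (p : int) (ps : 'I_n -> int), \sum_(k < n) ps k = p ->
     tensor_apply (first_factor (n:=n) (mxpowz X p)) psi
     = tensor_apply (fun k => mxpowz X (ps k)) psi).
Proof.
case: n psi => [|n] psi // _ sym_psi sym_Xpsi.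
have first_at_site M : first_factor M = at_site ord0 M.
  by apply: functional_extensionality => -[[|j] ?].
rewrite first_at_site in sym_Xpsi; have inv_X := site_invariant_sym sym_psi sym_Xpsi.
split=> [p ps <-|uX p ps <-]; rewrite first_at_site.
  by rewrite (tensor_apply_pow_site_invariant ord0 _ inv_X).
case: d X psi sym_psi sym_Xpsi inv_X uX => [|d] X psi _ _ inv_X uX.
  by apply: eq_tensor_apply => k; rewrite (thinmx0 (at_site _ _ k)) thinmx0.
transitivity (tensor_apply (fun k => X ^ ps k) psi).
  by rewrite mxpowzE (tensor_apply_powz_site_invariant ord0).
by apply: eq_tensor_apply => k; rewrite mxpowzE.
Qed.
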